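(* The following two statements are equivalent: (1) For every prime $p>2$, the graph $\mathcal{G}_p^\times$ is connected and is equivalent to the graph $\mathcal{G}^\times$ with triples congruent modulo $p$ identified. (2) For every prime $p>2$, the canonical reduction map $\mathcal{M} \to \mathcal{M}_p$, $(a,b,c) \mapsto (a \bmod p, b \bmod p, c \bmod p)$, is onto.
   Context: $\mathcal{M}$ is the set of triples $(a,b,c)$ of nonnegative integers with $a^2+b^2+c^2 - abc = 0$, and $\mathcal{M}^\times = \mathcal{M}\setminus\{(0,0,0)\}$. For a prime $p > 2$, $\mathcal{M}_p$ is the set of $(x,y,z) \in (\mathbb{Z}/p\mathbb{Z})^3$ with $x^2+y^2+z^2-xyz \equiv 0 \pmod p$ and $\mathcal{M}_p^\times = \mathcal{M}_p \setminus\{(0,0,0)\}$. The Vieta involutions are $V_1(a,b,c) = (bc-a,b,c)$, $V_2(a,b,c) = (a,ac-b,c)$, $V_3(a,b,c) = (a,b,ab-c)$. The Markoff tree $\mathcal{G}^\times$ is the graph with vertex set $\mathcal{M}^\times$ (a connected tree rooted at $(3,3,3)$) with an edge labeled $V_i$ between $v_1,v_2$ whenever $V_i(v_1) = v_2$; the graph $\mathcal{G}_p^\times$ is defined in the same way with vertex set $\mathcal{M}_p^\times$ and the involutions taken modulo $p$. *)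

From HB Require Import structures.
From mathcomp Require Import all_boot all_order all_algebra.
From Stdlib Require Import Relations.
Set Implicit Arguments. Unset Strict Implicit. Unset Printing Implicit Defensive.
Import Order.TTheory GRing.Theory Num.Theory.
Local Open Scope ring_scope.

Definition triple (R : Type) := (R * R * R)%type.

Definition markoff_form (R : comRingType) (t : triple R) : R :=
  let '(a, b, c) := t in a ^+ 2 + b ^+ 2 + c ^+ 2 - a * b * c.

(* Vieta involutions V_1, V_2, V_3 (indexed by i : 'I_3, i = 0,1,2) *)
Definition vieta (R : comRingType) (i : 'I_3) (t : triple R) : triple R :=
  let '(a, b, c) := t in
  match val i with
  | 0%N => (b * c - a, b, c)
  | 1%N => (a, a * c - b, c)
  | _ => (a, b, a * b - c)
  end.

Definition inM (t : triple int) : Prop :=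
  let '(a, b, c) := t in
  [/\ 0 <= a, 0 <= b, 0 <= c & markoff_form t = 0].

Definition inMx (t : triple int) : Prop := inM t /\ t <> (0, 0, 0).

Definition inMp (p : nat) (x : triple 'F_p) : Prop := markoff_form x = 0.
Definition inMpx (p : nat) (x : triple 'F_p) : Prop := inMp x /\ x <> (0, 0, 0).

Definition red (p : nat) (t : triple int) : triple 'F_p :=
  let '(a, b, c) := t in (a%:~R, b%:~R, c%:~R).

Definition edgeG (i : 'I_3) (u v : triple int) : Prop :=
  [/\ inMx u, inMx v & vieta i u = v].
Definition edgeGp (p : nat) (i : 'I_3) (x y : triple 'F_p) : Prop :=
  [/\ inMpx x, inMpx y & vieta i x = y].

Definition Gp_connected (p : nat) : Prop :=
  forall x y : triple 'F_p, inMpx x -> inMpx y ->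
    clos_refl_trans _ (fun x' y' => exists i, edgeGp i x' y') x y.

(* G_p^x coincides with G^x with triples congruent mod p identified:
   the vertices are the (nonzero) classes of reductions of vertices of G^x,
   and two classes are joined by a V_i-edge iff some representatives are. *)
Definition Gp_is_quotient (p : nat) : Prop :=
  (forall x : triple 'F_p,
     inMpx x <-> (x <> (0, 0, 0) /\ exists u, inMx u /\ red p u = x))
  /\
  (forall (i : 'I_3) (x y : triple 'F_p), inMpx x -> inMpx y ->
     (edgeGp i x y <->
      exists u v, [/\ edgeG i u v, red p u = x & red p v = y])).

(* Markoff descent: in a nonzero Markoff triple other than (3,3,3), replacing the
   largest coordinate a by its Vieta conjugate bc - a lowers the coordinate sum, so
   every vertex of the Markoff tree is joined to (3,3,3). Reducing such paths mod p
   gives paths in G_p^x, because the Vieta involutions commute with reduction and,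
   being involutions fixing 0, keep nonzero triples nonzero. Hence if every point
   of M_p lifts to M, the graph G_p^x is connected and its vertices and edges are
   exactly the reductions of those of G^x. Conversely the quotient description lifts
   every nonzero point of M_p, and 0 lifts to 0. *)
From mathcomp Require Import all_boot all_order all_algebra.
From mathcomp Require Import zify ring.
From Stdlib Require Import Relations.
Set Implicit Arguments. Unset Strict Implicit.
Import Order.TTheory GRing.Theory Num.Theory.
Local Open Scope ring_scope.

Lemma clos_rt_sym (A : Type) (R : relation A) :
  symmetric A R -> symmetric A (clos_refl_trans A R).
Proof.
move=> symR x y; elim=> [x' y' /symR | x' | x' y' z _ IHxy _ IHyz].
- exact: rt_step.
- exact: rt_refl.
- exact: rt_trans IHyz IHxy.
Qed.

Section Vieta.
Variable R : comNzRingType.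
Implicit Types t : triple R.

Lemma vietaK i : involutive (@vieta R i).
Proof. by case=> [[a b] c]; case: i => [[|[|[|k]]] Hi] //=; congr (_, _, _); ring. Qed.

Lemma markoff_form_vieta i t : markoff_form (vieta i t) = markoff_form t.
Proof. by case: t => [[a b] c]; case: i => [[|[|[|k]]] Hi] //=; ring. Qed.

Lemma vieta_eq0 i t : vieta i t = (0, 0, 0) <-> t = (0, 0, 0).
Proof.
have vieta0 : vieta i (0, 0, 0) = (0, 0, 0) :> triple R.
  by case: i => [[|[|[|k]]] Hi] //=; rewrite mulr0 subr0.
by split=> [e | ->]; first rewrite -(vietaK i t) e.
Qed.

End Vieta.

Lemma red_vieta p i t : red p (vieta i t) = vieta i (red p t).
Proof. by case: t => [[a b] c]; case: i => [[|[|[|k]]] Hi] //=; rewrite intrB intrM. Qed.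

Lemma markoff_form_red p t : markoff_form (red p t) = (markoff_form t)%:~R.
Proof. by case: t => [[a b] c] /=; rewrite !intrB !intrD !intrM !expr2. Qed.

Lemma inMp_red p t : inM t -> inMp (red p t).
Proof. by rewrite /inMp markoff_form_red; case: t => [[a b] c] [_ _ _ ->]. Qed.

Lemma markoff_root_ge0 (a b c : int) : 0 <= b -> 0 <= c ->
  markoff_form (a, b, c) = 0 -> 0 <= b * c - a.
Proof.
move=> b0 c0 E; have [a_le0 | a_gt0] := lerP a 0.
  by rewrite subr_ge0 (le_trans a_le0) ?mulr_ge0.
rewrite -(pmulr_rge0 _ a_gt0).
have -> : a * (b * c - a) = b ^+ 2 + c ^+ 2 - markoff_form (a, b, c).
  by rewrite /markoff_form; ring.
by rewrite E subr0 addr_ge0 ?sqr_ge0.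
Qed.

Lemma inM_vieta i t : inM t -> inM (vieta i t).
Proof.
case: t => [[a b] c] [a0 b0 c0 E].
have E' := markoff_form_vieta i (a, b, c).
case: i E' => [[|[|[|k]]] Hi] //= E'; split; rewrite ?E' //.
- exact: markoff_root_ge0.
- by apply: markoff_root_ge0 => //; rewrite -E /markoff_form; ring.
- by apply: markoff_root_ge0 => //; rewrite -E /markoff_form; ring.
Qed.

Lemma inMx_vieta i t : inMx t -> inMx (vieta i t).
Proof. by case=> Mt /(vieta_eq0 i) nz0; split; first exact: inM_vieta. Qed.

Lemma markoff_small_entry (a b c : int) : 0 <= a -> 0 <= b -> 0 <= c <= 2 ->
  markoff_form (a, b, c) = 0 -> (a, b, c) = (0, 0, 0).
Proof.
rewrite /markoff_form !expr2 => a0 b0 /andP[c0 c2] E.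
have abc_le : a * b * c <= 2 * (a * b) by rewrite mulrC ler_wpM2r ?mulr_ge0.
have amgm : 2 * (a * b) <= a * a + b * b.
  by have := sqr_ge0 (a - b); rewrite expr2; lia.
have aa0 := mulr_ge0 a0 a0; have bb0 := mulr_ge0 b0 b0; have cc0 := mulr_ge0 c0 c0.
have /eqP : c * c = 0 by lia.
rewrite mulf_eq0 orbb => /eqP c_0; subst c.
have /eqP : a * a = 0 by lia.
have /eqP : b * b = 0 by lia.
by rewrite !mulf_eq0 !orbb => /eqP-> /eqP->.
Qed.

Lemma markoff_root_lt (a b c : int) : 0 <= b <= a -> 0 <= c <= a ->
  markoff_form (a, b, c) = 0 -> (a, b, c) <> (0, 0, 0) -> (a, b, c) <> (3, 3, 3) ->
  b * c - a < a.
Proof.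
wlog cb : b c / c <= b => [hwlog|].
  move=> hb hc E n0 n3; have [cb | /ltW bc] := lerP c b; first exact: hwlog.
  rewrite mulrC; apply: hwlog => //.
  - by rewrite -E /markoff_form; ring.
  - by case=> *; subst; apply: n0.
  - by case=> *; subst; apply: n3.
move=> /andP[b0 ba] /andP[c0 ca] E n0 n3.
have [c2 | c3] := lerP c 2.
  by case: n0; apply: markoff_small_entry; rewrite ?c0 ?(le_trans b0 ba).
rewrite ltNge; apply/negP => a'_ge.
have E' : a * a + b * b + c * c = a * b * c by move: E; rewrite /markoff_form !expr2; lia.
(* Both roots a and bc - a of X^2 - bcX + b^2 + c^2 are >= b; with Vieta's formulas
   (a - b)(bc - a - b) >= 0 becomes b^2 c <= 2 b^2 + c^2, forcing b = c = 3. *)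
have key : b * b * c <= 2 * (b * b) + c * c.
  have : 0 <= (a - b) * ((b * c - a) - b) by apply: mulr_ge0; lia.
  nia.
have [c_3 b_3] : c = 3 /\ b = 3 by nia.
subst b c.
have a_3 : a = 3 by nia.
by apply: n3; rewrite a_3.
Qed.

Definition markoff_sum (t : triple int) : int := let '(a, b, c) := t in a + b + c.

Lemma markoff_descent t : inMx t -> t <> (3, 3, 3) ->
  exists i, markoff_sum (vieta i t) < markoff_sum t.
Proof.
case: t => [[a b] c] [[a0 b0 c0 E] n0] n3.
have E_perm (x y z : int) : x * x + y * y + z * z = x * y * z -> markoff_form (x, y, z) = 0.
  by move=> Exyz; rewrite /markoff_form !expr2 Exyz subrr.
move: E; rewrite /markoff_form !expr2 => /eqP; rewrite subr_eq0 => /eqP E.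
have : (b <= a /\ c <= a) \/ (a <= b /\ c <= b) \/ (a <= c /\ b <= c) by lia.
case=> [[ba ca] | [[ab cb] | [ac bc]]].
- exists (@Ordinal 3 0 isT) => /=; suff : b * c - a < a by lia.
  apply: markoff_root_lt; [lia | lia | apply: E_perm; lia | by case=> *; subst | by case=> *; subst].
- exists (@Ordinal 3 1 isT) => /=; suff : a * c - b < b by lia.
  apply: markoff_root_lt; [lia | lia | apply: E_perm; lia | by case=> *; subst | by case=> *; subst].
- exists (@Ordinal 3 2 isT) => /=; suff : a * b - c < c by lia.
  apply: markoff_root_lt; [lia | lia | apply: E_perm; lia | by case=> *; subst | by case=> *; subst].
Qed.

Definition Gx_adj (u v : triple int) : Prop := exists i, edgeG i u v.
Definition Gpx_adj (p : nat) (x y : triple 'F_p) : Prop := exists i, edgeGp i x y.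

Lemma Gx_adj_sym : symmetric _ Gx_adj.
Proof. by move=> u v [i [Mu Mv uv]]; exists i; split; rewrite // -uv vietaK. Qed.

Lemma markoff_sum_ge0 t : inM t -> 0 <= markoff_sum t.
Proof. by case: t => [[a b] c] [a0 b0 c0 _]; rewrite !addr_ge0. Qed.

Lemma Gx_connected_to_root u : inMx u -> clos_refl_trans _ Gx_adj u (3, 3, 3).
Proof.
move: {2}(absz (markoff_sum u)).+1 (ltnSn (absz (markoff_sum u))) => n.
elim: n u => [|n IHn] u // sum_lt Mu.
have [-> | /eqP u_neq] := eqVneq u (3, 3, 3); first exact: rt_refl.
have [i sum_vieta_lt] := markoff_descent Mu u_neq.
have Mv := inMx_vieta i Mu.
apply: rt_trans (IHn _ _ Mv); first by apply: rt_step; exists i.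
have := markoff_sum_ge0 Mv.1; have := markoff_sum_ge0 Mu.1; lia.
Qed.

Lemma red_edge p i u v : edgeG i u v -> red p u <> (0, 0, 0) ->
  edgeGp i (red p u) (red p v).
Proof.
case=> [[Mu _] _ <-] nz; rewrite red_vieta; split=> //.
- by split; first exact: inMp_red.
- split; last by move/vieta_eq0.
  by rewrite -red_vieta; apply/inMp_red/inM_vieta.
Qed.

Lemma red_path p u v : clos_refl_trans _ Gx_adj u v -> red p u <> (0, 0, 0) ->
  clos_refl_trans _ (@Gpx_adj p) (red p u) (red p v).
Proof.
move=> uv; elim: (clos_rt_rt1n _ _ _ _ uv) => [w | w w' v' [i e] _ IH] nz; first exact: rt_refl.
have e' := red_edge e nz.
apply: rt_trans (IH _); first by apply: rt_step; exists i.
by case: e' => _ [].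
Qed.

Definition red_Mx_onto (p : nat) : Prop :=
  forall x : triple 'F_p, inMpx x -> exists u, inMx u /\ red p u = x.

Lemma red_Mx_onto_of_M p :
  (forall x : triple 'F_p, inMp x -> exists t, inM t /\ red p t = x) -> red_Mx_onto p.
Proof.
move=> onto x [Mx nz]; have [t [Mt tx]] := onto x Mx.
by exists t; split=> //; split=> // t0; apply: nz; rewrite -tx t0.
Qed.

Lemma Gp_connected_of_onto p : red_Mx_onto p -> Gp_connected p.
Proof.
move=> onto x y Mx My.
have [u [Mu ux]] := onto x Mx; have [v [Mv vy]] := onto y My.
rewrite -ux -vy; apply: red_path; last by rewrite ux; case: Mx.
apply: rt_trans (Gx_connected_to_root Mu) _.
exact: clos_rt_sym Gx_adj_sym _ _ (Gx_connected_to_root Mv).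
Qed.

Lemma Gp_is_quotient_of_onto p : red_Mx_onto p -> Gp_is_quotient p.
Proof.
move=> onto; split=> [x | i x y Mx My]; split.
- by move=> Mx; split; [case: Mx | exact: onto].
- by case=> nz [u [[Mu _] ux]]; subst x; split; first exact: inMp_red.
- move=> xy; have [u [Mu ux]] := onto x Mx.
  exists u, (vieta i u); split=> //; first by split=> //; exact: inMx_vieta.
  by case: xy => _ _ <-; rewrite red_vieta ux.
- by case=> u [v [uv ux vy]]; subst x y; exact: red_edge uv Mx.2.
Qed.

Lemma M_onto_of_quotient p : Gp_is_quotient p ->
  forall x : triple 'F_p, inMp x -> exists t, inM t /\ red p t = x.
Proof.
case=> vertices _ x Mx; have [-> | /eqP nz] := eqVneq x (0, 0, 0).
  by exists (0, 0, 0); split=> //; split; rewrite ?lexx.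
by have [_ [u [[Mu _] ux]]] := (vertices x).1 (conj Mx nz); exists u.
Qed.

Theorem lemma2 :
  (forall p : nat, prime p -> (2 < p)%N -> Gp_connected p /\ Gp_is_quotient p)
  <->
  (forall p : nat, prime p -> (2 < p)%N ->
     forall x : triple 'F_p, inMp x -> exists t, inM t /\ red p t = x).
Proof.
split=> [quotient p p_prime p_gt2 | onto p p_prime p_gt2].
  by apply: M_onto_of_quotient; case: (quotient p p_prime p_gt2).
have Mx_onto := red_Mx_onto_of_M (onto p p_prime p_gt2).
by split; [exact: Gp_connected_of_onto | exact: Gp_is_quotient_of_onto].
Qed.
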